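(* Let $c_n$ be the number of equivalence classes of $n$-diagrams under the action of the cyclic group $C_{2n}$ of order $2n$ generated by the rotation $j\mapsto j+1\pmod{2n}$ of $[2n]$. Then $c_n\ge \underline{c}_n := (2n)^{-1}(2n-1)!!$ for $n\ge1$, and \[ c_n \sim \frac{(2n-1)!!}{2n} \quad \text{as } n\to\infty. \]
   Context: A chord diagram of order $n$ (an $n$-diagram) is a 3-regular graph on vertex set $[2n]=\{1,\dots,2n\}$ containing the $2n$-circuit $\Delta_{2n}=(1\,2\,\dots\,2n)$ as a subgraph; the edges not in $\Delta_{2n}$ are the chords (they form a perfect matching of $[2n]$). Given a group $G$ of permutations of $[2n]$ acting on $\Delta_{2n}$, two $n$-diagrams are equivalent if some $g\in G$ takes the chords of the first onto the chords of the second. *)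

From mathcomp Require Import all_boot all_order all_algebra.
Set Implicit Arguments. Unset Strict Implicit. Unset Printing Implicit Defensive.
Import Order.TTheory GRing.Theory Num.Theory.

(* Vertices of Delta_{2n}: 'I_(2n) = {0,...,2n-1} (vertex j+1 of the paper is j here). *)

Lemma rot_proof (m k : nat) (i : 'I_m) : (i + k) %% m < m.
Proof. by rewrite ltn_mod (leq_ltn_trans (leq0n i) (ltn_ord i)). Qed.

Definition rot (m k : nat) (i : 'I_m) : 'I_m := Ordinal (rot_proof k i).

Definition perfect_matching (m : nat) (P : {set {set 'I_m}}) : bool :=
  partition P [set: 'I_m] && [forall e in P, #|e| == 2].

(* The n-diagrams, identified with their chord sets (the circuit Delta_{2n} is
   common to all of them). *)
Definition diagrams (n : nat) : {set {set {set 'I_(2 * n)}}} :=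
  [set P | perfect_matching P].

Definition chord_image (m : nat) (g : 'I_m -> 'I_m) (P : {set {set 'I_m}})
  : {set {set 'I_m}} := [set g @: e | e : {set 'I_m} in P].

Definition cyc_equiv (n : nat) : rel {set {set 'I_(2 * n)}} :=
  fun P Q => [exists k : 'I_(2 * n), chord_image (rot k) P == Q].

Definition c (n : nat) : nat :=
  #|equivalence_partition (@cyc_equiv n) (diagrams n)|.

Definition oddfact (n : nat) : nat := \prod_(i < n) (2 * i + 1).

From Pilot Require Import Defs.
From mathcomp Require Import all_boot all_order all_algebra.
From mathcomp Require Import zify.
Set Implicit Arguments. Unset Strict Implicit. Unset Printing Implicit Defensive.

(* A rotation class of diagrams has at most 2n elements, and exactly 2n unless
   it contains a diagram fixed by a nontrivial rotation.  Counting the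
   (2n-1)!! diagrams class by class therefore gives
   (2n-1)!! <= 2n c_n <= (2n-1)!! + 2n s_n, with s_n the number of symmetric
   diagrams.  A matching of 2h or 2h+1 points fixed by a nontrivial rotation r
   is built recursively: the partner of a point x is either r x, and then the
   r-orbit of the chord covers at least 2 points, or one of at most 2h other
   points, and then the orbit covers at least 4.  So there are at most g(h)
   such matchings, where g(h) = g(h-1) + 2h g(h-2), and since
   h^3 g(h) <= 50 (2h-1)!!, we get 0 <= 2n c_n / (2n-1)!! - 1 <= 200 / n. *)

(* Without it, [rot] would denote [seq.rot]. *)
Local Notation rot := Defs.rot.

Lemma partitionD (T : finType) (P Q : {set {set T}}) (D : {set T}) :
  partition P D -> Q \subset P -> partition (P :\: Q) (D :\: cover Q).
Proof.
move=> pP QP; have tP := partition_trivIset pP.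
apply/and3P; split; last by rewrite inE (partition0 pP) andbF.
- rewrite -(cover_partition pP); apply/eqP/setP => z; rewrite inE.
  apply/bigcupP/andP => [[B /setDP[BP BQ] zB]|[zQ /bigcupP[B BP zB]]].
    split; last by apply/bigcupP; exists B.
    apply/bigcupP => -[B' B'Q zB'].
    have BB' : B = B'.
      by rewrite -(def_pblock tP BP zB) (def_pblock tP (subsetP QP _ B'Q) zB').
    by move: BQ; rewrite BB' B'Q.
  exists B => //; rewrite inE BP andbT; apply: contra zQ => BQ.
  by apply/bigcupP; exists B.
- exact: trivIsetD.
Qed.

Lemma card_bigcup_le (I T : finType) (p : pred I) (F : I -> {set T}) :
  #|\bigcup_(i | p i) F i| <= \sum_(i | p i) #|F i|.
Proof.
elim/big_rec2: _ => [|i k U _ h]; first by rewrite cards0.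
by rewrite (leq_trans (leq_card_setU _ _).1) ?leq_add2l.
Qed.

Lemma leq_sum_but_one (I : finType) (B : {set I}) (F : I -> nat) z a b :
  (z \in B -> F z <= a) -> (forall y, y \in B -> y != z -> F y <= b) ->
  \sum_(y in B) F y <= a + #|B| * b.
Proof.
move=> Fz Fy; rewrite -sum_nat_const.
have [zB | zB] := boolP (z \in B); last first.
  apply: leq_trans (leq_addl a _); apply: leq_sum => y yB.
  by apply: Fy => //; apply: contraNneq zB => <-.
rewrite (bigD1 z zB) [\sum_(i in B) b](bigD1 z zB) /= addnA.
apply: leq_add; first exact: leq_trans (Fz zB) (leq_addr _ _).
by apply: leq_sum => y /andP[yB]; apply: Fy.
Qed.

Lemma card_setD_shrink (T : finType) (A B : {set T}) h d :
  #|A| <= (2 * h).+1 -> 2 * d <= #|A :&: B| ->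
  d <= h /\ #|A :\: B| <= (2 * (h - d)).+1.
Proof. by move=> cA le_d; have := cardsID B A; lia. Qed.

Lemma oddfactS h : oddfact h.+1 = oddfact h * (2 * h + 1).
Proof. by rewrite /oddfact big_ord_recr. Qed.

Section Matchings.

Variable T : finType.
Implicit Types (x y : T) (A e : {set T}) (P Q : {set {set T}}) (S : {set {set {set T}}}).

Definition matching_on A P := partition P A && [forall e in P, #|e| == 2].

Definition matchings A := [set P | matching_on A P].

Definition partner x P := odflt x [pick y in pblock P x :\ x].

Lemma partner_eq x y P : pblock P x = [set x; y] -> y != x -> partner x P = y.
Proof.
rewrite /partner => -> yx.
case: pickP => [z | /(_ y)]; last by rewrite !inE yx eqxx orbT.
by rewrite !inE => /andP[/negbTE -> /= /eqP].
Qed.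

Lemma matching_pblock A P x : matching_on A P -> x \in A ->
  [/\ pblock P x = [set x; partner x P], partner x P != x,
      partner x P \in A & pblock P x \in P].
Proof.
case/andP=> pP /forall_inP c2 xA.
have bP : pblock P x \in P by rewrite pblock_mem ?(cover_partition pP).
have xb : x \in pblock P x by rewrite mem_pblock (cover_partition pP).
have [y [yx ey]] : exists y, y != x /\ pblock P x = [set x; y].
  have /cards2P[a [b [ab eb]]] := c2 _ bP.
  move: xb; rewrite eb !inE => /orP[]/eqP ->.
    by exists b; split; rewrite // eq_sym.
  by exists a; split; rewrite // setUC.
rewrite (partner_eq ey yx); split => //.
by apply: (subsetP (partitionS pP bP)); rewrite ey !inE eqxx orbT.
Qed.

Lemma matching_onD A P Q :
  matching_on A P -> Q \subset P -> matching_on (A :\: cover Q) (P :\: Q).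
Proof.
case/andP=> pP /forall_inP c2 QP; rewrite /matching_on partitionD //=.
by apply/forall_inP => e /setDP[eP _]; apply: c2.
Qed.

Lemma matching_onU1 A P e :
  matching_on (A :\: e) P -> e \subset A -> #|e| = 2 -> matching_on A (e |: P).
Proof.
case/andP=> pP /forall_inP c2 eA ce.
have eAe : [disjoint e & A :\: e].
  by rewrite disjoints_subset; apply/subsetP => z ze; rewrite !inE ze.
rewrite /matching_on -(setID A e) (setIidPr eA) partitionU1 ?eAe //=; last first.
  by rewrite -card_gt0 ce.
by apply/forall_inP => f /setU1P[-> | /c2 //]; rewrite ce.
Qed.

Lemma card_by_partner A S x : x \in A -> S \subset matchings A ->
  #|S| = \sum_(y in A :\ x) #|[set P in S | partner x P == y]|.
Proof.
move=> xA /subsetP SA.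
rewrite -sum1_card (partition_big (partner x) (mem (A :\ x))).
  by apply: eq_bigr => y _; rewrite -sum1_card; apply: eq_bigl => P; rewrite inE.
move=> P /SA; rewrite inE => /matching_pblock/(_ xA)[_ px pA _].
by rewrite !inE px pA.
Qed.

Lemma card_partner_fiber A x y : x \in A -> y \in A :\ x ->
  #|[set P in matchings A | partner x P == y]| = #|matchings (A :\: [set x; y])|.
Proof.
rewrite !inE => xA /andP[yx yA]; set e := [set x; y].
have ce : #|e| = 2 by rewrite cards2 eq_sym yx.
have eA : e \subset A by apply/subsetP => z; rewrite !inE => /orP[]/eqP->.
have eP P : P \in [set P in matchings A | partner x P == y] -> e \in P.
  rewrite !inE => /andP[mP /eqP py].
  by have [pb _ _ bP] := matching_pblock mP xA; rewrite /e -py -pb.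
apply/eqP; rewrite eqn_leq; apply/andP; split.
- rewrite -(card_in_imset (f := fun P => P :\ e)); last first.
    by move=> P Q /eP PE /eP QE /= PQ; rewrite -(setD1K PE) -(setD1K QE) PQ.
  apply/subset_leq_card/subsetP => _ /imsetP[P PF ->]; have := PF.
  rewrite !inE => /andP[/andP[pP c2] _].
  rewrite /matching_on partitionD1 ?eP //=.
  by apply/forall_inP => f /setD1P[_]; apply: (forall_inP c2).
- have eN P : P \in matchings (A :\: e) -> e \notin P.
    rewrite inE => /andP[pP _]; apply/negP => /(partitionS pP)/subsetP/(_ x).
    by rewrite !inE eqxx => /(_ isT).
  rewrite -(card_in_imset (f := fun P => e |: P)); last first.
    by move=> P Q /eN PE /eN QE /= PQ; rewrite -(setU1K PE) -(setU1K QE) PQ.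
  apply/subset_leq_card/subsetP => _ /imsetP[P mP ->]; rewrite inE in mP.
  have mA := matching_onU1 mP eA ce.
  rewrite !inE mA /=; apply/eqP/partner_eq => //.
  apply: def_pblock; first by case/andP: mA => /partition_trivIset.
    by rewrite setU11.
  by rewrite !inE eqxx.
Qed.

Lemma card_matchings h A : #|A| = (2 * h)%N -> #|matchings A| = oddfact h.
Proof.
elim: h A => [|h IH] A cA.
  rewrite muln0 in cA; rewrite (cards0_eq cA) /oddfact big_ord0.
  apply/eqP/cards1P; exists set0; apply/setP => P; rewrite !inE /matching_on.
  rewrite partition_set0; case: eqP => [-> | //].
  by apply/forall_inP => e; rewrite inE.
have /card_gt0P[x xA] : 0 < #|A| by rewrite cA muln_gt0.
rewrite (card_by_partner xA) // (eq_bigr (fun _ => oddfact h)); last first.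
  move=> y yAx; rewrite card_partner_fiber //; apply: IH.
  move: yAx; rewrite !inE => /andP[yx yA].
  rewrite cardsD cA (setIidPr _) ?cards2 1?eq_sym ?yx; first lia.
  by apply/subsetP => z; rewrite !inE => /orP[]/eqP->.
have := cardsD1 x A; rewrite xA cA => cAx.
by rewrite sum_nat_const oddfactS mulnC; congr (_ * _); lia.
Qed.

End Matchings.

Section Rotations.

Variable m : nat.
Implicit Types (i : 'I_m) (e : {set 'I_m}) (P : {set {set 'I_m}}).

Lemma rotD a b i : rot a (rot b i) = rot (b + a) i.
Proof. by apply: val_inj => /=; rewrite modnDml addnA. Qed.

Lemma rot_modn a i : rot (a %% m) i = rot a i.
Proof. by apply: val_inj => /=; rewrite modnDmr. Qed.

Lemma rot_mulm j i : rot (j * m) i = i.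
Proof. by apply: val_inj => /=; rewrite addnC modnMDl modn_small. Qed.

Lemma rot_inj k : injective (@rot m k).
Proof.
move=> i j /(congr1 (rot (m.-1 * k))); rewrite !rotD.
have m_gt0 : 0 < m by case: m i {j} => [[]|].
by rewrite -mulSn prednK // mulnC !rot_mulm.
Qed.

Lemma rot_neq k i : 0 < k < m -> rot k i != i.
Proof.
move=> /andP[k_gt0 k_lt]; have i_lt := ltn_ord i; apply/eqP => /(congr1 val) /=.
have [ikm | mik] := ltnP (i + k) m; first by rewrite modn_small //; lia.
by rewrite -(subnK mik) modnDr modn_small; lia.
Qed.

Lemma imset_rotD a b e : rot a @: (rot b @: e) = rot (b + a) @: e.
Proof. by rewrite -imset_comp; apply: eq_imset => i /=; rewrite rotD. Qed.

Lemma imset_rot_mulm j e : rot (j * m) @: e = e.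
Proof. by rewrite (eq_imset _ (rot_mulm j)) imset_id. Qed.

Lemma imset_rot0 e : rot 0 @: e = e.
Proof. exact: imset_rot_mulm 0 e. Qed.

Lemma chord_imageD a b P :
  chord_image (rot a) (chord_image (rot b) P) = chord_image (rot (b + a)) P.
Proof.
by rewrite /chord_image -imset_comp; apply: eq_imset => e /=; rewrite imset_rotD.
Qed.

Lemma chord_image_modn a P : chord_image (rot (a %% m)) P = chord_image (rot a) P.
Proof. by apply: eq_imset => e; apply: eq_imset => i; rewrite rot_modn. Qed.

Lemma chord_image_mulm j P : chord_image (rot (j * m)) P = P.
Proof. by rewrite /chord_image (eq_imset _ (imset_rot_mulm j)) imset_id. Qed.

Lemma chord_image_rot0 P : chord_image (rot 0) P = P.
Proof. exact: chord_image_mulm 0 P. Qed.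

Lemma chord_imageC a b P :
  chord_image (rot a) (chord_image (rot b) P) =
  chord_image (rot b) (chord_image (rot a) P).
Proof. by rewrite !chord_imageD addnC. Qed.

Lemma chord_imageK a :
  0 < m -> cancel (@chord_image m (rot a)) (chord_image (rot (m.-1 * a))).
Proof.
by move=> m_gt0 P; rewrite chord_imageD -mulSn prednK // mulnC chord_image_mulm.
Qed.

End Rotations.

Fixpoint stable_bound h :=
  if h is h'.+1 then
    stable_bound h' + 2 * h * (if h' is h''.+1 then stable_bound h'' else 1)
  else 1.

Lemma stable_boundE h :
  stable_bound h = stable_bound (h - 1) + 2 * h * stable_bound (h - 2).
Proof. by case: h => [|[|h]]; rewrite subn1 subn2. Qed.

Lemma stable_bound_gt0 h : 0 < stable_bound h.
Proof. by elim: h => //= h IH; rewrite addn_gt0 IH. Qed.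

Section StableMatchings.

Variables m k : nat.
Hypothesis k_range : 0 < k < m.
Implicit Types (x y : 'I_m) (A e : {set 'I_m}) (P : {set {set 'I_m}}).

Let m_gt0 : 0 < m.
Proof. by case/andP: k_range; apply: ltn_trans. Qed.

Definition rot_stable P := chord_image (rot k) P \subset P.

Definition stable_matchings A := [set P in matchings A | rot_stable P].

Lemma in_stable_matchings A P :
  (P \in stable_matchings A) = matching_on A P && rot_stable P.
Proof. by rewrite !inE. Qed.

Definition chord_orbit e := [set rot (j * k) @: e | j : 'I_m].

Lemma rot_stable_iter P e j : rot_stable P -> e \in P -> rot (j * k) @: e \in P.
Proof.
move=> /subsetP sP eP; elim: j => [|j IH]; first by rewrite mul0n imset_rot0.
by rewrite mulSn addnC -imset_rotD; apply: sP; apply: imset_f.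
Qed.

Lemma mem_chord_orbit e j : rot (j * k) @: e \in chord_orbit e.
Proof.
apply/imsetP; exists (Ordinal (ltn_pmod j m_gt0)) => //=.
by apply: eq_imset => i /=; rewrite -rot_modn -[in RHS]rot_modn /= modnMml.
Qed.

Lemma chord_orbit_sub P e : rot_stable P -> e \in P -> chord_orbit e \subset P.
Proof. by move=> sP eP; apply/subsetP => _ /imsetP[j _ ->]; apply: rot_stable_iter. Qed.

Lemma rot_stableD P e : rot_stable P -> rot_stable (P :\: chord_orbit e).
Proof.
move=> sP; apply/subsetP => _ /imsetP[f /setDP[fP fO] ->].
rewrite inE (subsetP sP _ (imset_f _ fP)) andbT; apply: contra fO => /imsetP[j _ fe].
suff <- : rot ((j + m.-1) * k) @: e = f by apply: mem_chord_orbit.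
by rewrite mulnDl -imset_rotD -fe imset_rotD -mulSn prednK // mulnC imset_rot_mulm.
Qed.

Lemma sub_cover_chord_orbit e : e \subset cover (chord_orbit e).
Proof. by apply: bigcup_sup; have := mem_chord_orbit e 0; rewrite mul0n imset_rot0. Qed.

Lemma card_stable_fiber A x y : x \in A ->
  #|[set P in stable_matchings A | partner x P == y]| <=
  #|stable_matchings (A :\: cover (chord_orbit [set x; y]))|.
Proof.
move=> xA; set O := chord_orbit _.
have OP P : P \in [set P in stable_matchings A | partner x P == y] ->
    O \subset P /\ P \in stable_matchings A.
  rewrite inE => /andP[PS /eqP py]; split => //.
  move: PS; rewrite in_stable_matchings => /andP[mP sP].
  have [pb _ _ bP] := matching_pblock mP xA.
  by apply: chord_orbit_sub; rewrite // -py -pb.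
rewrite -(card_in_imset (f := fun P => P :\: O)); last first.
  move=> P Q /OP[OsP _] /OP[OsQ _] /= PQ.
  by rewrite -(setID P O) -(setID Q O) (setIidPr OsP) (setIidPr OsQ) PQ.
apply/subset_leq_card/subsetP => _ /imsetP[P /OP[OsP] + ->].
by rewrite !in_stable_matchings => /andP[mP sP]; rewrite matching_onD //= rot_stableD.
Qed.

Lemma four_le_cover_chord_orbit A P x :
  P \in stable_matchings A -> x \in A -> partner x P != rot k x ->
  4 <= #|A :&: cover (chord_orbit [set x; partner x P])|.
Proof.
rewrite in_stable_matchings => /andP[mP sP] xA yN; have /andP[pP /forall_inP c2] := mP.
have [pb _ _ bP] := matching_pblock mP xA.
set e := [set x; partner x P] in pb *; rewrite pb in bP.
set f := rot k @: e.
have fP : f \in P by apply: (subsetP sP); apply: imset_f.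
have xf : rot k x \in f by apply: imset_f; rewrite !inE eqxx.
have xe : rot k x \notin e by rewrite !inE negb_or rot_neq // eq_sym.
have dj : [disjoint e & f].
  by apply: (trivIsetP (partition_trivIset pP)) => //; apply: contraNneq xe => ->.
have cef : #|e :|: f| = 4.
  by rewrite cardsU (eqP (c2 _ fP)) (eqP (c2 _ bP)) (disjoint_setI0 dj) cards0.
rewrite -cef subset_leq_card // subUset !subsetI (partitionS pP bP) (partitionS pP fP).
rewrite sub_cover_chord_orbit /=; apply: bigcup_sup.
by rewrite /f -[k in rot k]mul1n; apply: mem_chord_orbit.
Qed.

Lemma card_stable_matchings h A :
  #|A| <= (2 * h).+1 -> #|stable_matchings A| <= stable_bound h.
Proof.
elim/ltn_ind: h A => h IH A cA.
have [-> | [x xA]] := set_0Vmem A.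
  have m0 : #|matchings (set0 : {set 'I_m})| = 1.
    by rewrite (card_matchings (h := 0)) ?cards0 // /oddfact big_ord0.
  apply: (leq_trans _ (stable_bound_gt0 h)); rewrite -m0.
  by apply/subset_leq_card/subsetP => P; rewrite in_stable_matchings inE => /andP[].
rewrite (card_by_partner xA); last first.
  by apply/subsetP => P; rewrite in_stable_matchings inE => /andP[].
have cAx : #|A :\ x| <= 2 * h by move: cA; rewrite (cardsD1 x A) xA; lia.
have shrink y d : 0 < d -> 2 * d <= #|A :&: cover (chord_orbit [set x; y])| ->
    #|[set P in stable_matchings A | partner x P == y]| <= stable_bound (h - d).
  move=> d_gt0 le_d; apply: leq_trans (card_stable_fiber y xA) _.
  have [le_dh cAC] := card_setD_shrink cA le_d.
  by apply: (IH _ _ _ cAC); lia.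
rewrite stable_boundE.
apply: leq_trans (leq_sum_but_one (z := rot k x) (a := stable_bound (h - 1))
                   (b := stable_bound (h - 2)) _ _) _.
- rewrite !inE => /andP[rx rA]; apply: shrink => //.
  have e2 : #|[set x; rot k x]| = 2 by rewrite cards2 eq_sym rx.
  rewrite muln1 -e2 subset_leq_card // subsetI sub_cover_chord_orbit andbT.
  by apply/subsetP => z; rewrite !inE => /orP[]/eqP->.
- move=> y _ yN.
  have [-> | [P]] := set_0Vmem [set P in stable_matchings A | partner x P == y].
    by rewrite cards0.
  rewrite inE => /andP[PS /eqP py]; apply: shrink => //.
  by rewrite -py four_le_cover_chord_orbit // py.
- by rewrite leq_add2l leq_mul2r cAx orbT.
Qed.

End StableMatchings.

Lemma stable_bound_step_poly h : 3 <= h ->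
  (h + 2) ^ 3 * (h ^ 3 * (2 * h + 1) + 2 * (h + 2) * (h + 1) ^ 3) <=
  (2 * h + 3) * (2 * h + 1) * h ^ 3 * (h + 1) ^ 3.
Proof.
move=> h_ge3; have [t ->] : exists t, h = t + 3 by exists (h - 3); lia.
by rewrite !expnS expn0 !muln1; nia.
Qed.

Lemma stable_bound_le n : n ^ 3 * stable_bound n <= 50 * oddfact n.
Proof.
elim/ltn_ind: n => n IH; have [n_le4 | n_gt4] := leqP n 4.
  by case: n n_le4 {IH} => [|[|[|[|[|]]]]] //; rewrite /oddfact ?big_ord_recr big_ord0.
have [h nE h_ge3] : exists2 h, n = h.+2 & 3 <= h by exists n.-2; lia.
subst n.
have IH1 := IH h.+1 (ltnSn _); have IH0 := IH h (ltnW (ltnSn _)).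
have -> : stable_bound h.+2 = stable_bound h.+1 + 2 * h.+2 * stable_bound h by [].
rewrite !oddfactS; rewrite oddfactS in IH1.
have poly := stable_bound_step_poly h_ge3.
have P_gt0 : 0 < h ^ 3 * h.+1 ^ 3 by rewrite muln_gt0 !expn_gt0 (ltn_trans _ h_ge3).
rewrite -(leq_pmul2r P_gt0).
have H1 := leq_mul IH1 (leqnn (h.+2 ^ 3 * h ^ 3)).
have H2 := leq_mul IH0 (leqnn (2 * h.+2 * h.+2 ^ 3 * h.+1 ^ 3)).
have H3 := leq_mul (leqnn (50 * oddfact h)) poly.
lia.
Qed.

Lemma oddfact_gt0 n : 0 < oddfact n.
Proof. by rewrite /oddfact prodn_gt0 // => i; rewrite addn1. Qed.

Lemma diagramsE n : diagrams n = matchings [set: 'I_(2 * n)].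
Proof. by apply/setP => P; rewrite !inE. Qed.

Lemma card_diagrams n : #|diagrams n| = oddfact n.
Proof. by rewrite diagramsE (card_matchings (h := n)) // cardsT card_ord. Qed.

Lemma chord_image_diagrams n k P :
  P \in diagrams n -> chord_image (rot k) P \in diagrams n.
Proof.
rewrite !inE => /andP[pP /forall_inP c2].
have inj := @rot_inj (2 * n) k.
have rotT : rot k @: [set: 'I_(2 * n)] = setT.
  by apply/eqP; rewrite eqEcard subsetT (card_imset _ inj) leqnn.
apply/andP; split; first by rewrite /chord_image -rotT imset_partition.
by apply/forall_inP => _ /imsetP[e eP ->]; rewrite (card_imset _ inj) c2.
Qed.

Section CyclicClasses.

Variable n : nat.
Hypothesis n_gt0 : 0 < n.
Implicit Types P Q : {set {set 'I_(2 * n)}}.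

Let m_gt0 : 0 < 2 * n.
Proof. by rewrite muln_gt0. Qed.

Local Notation classes := (equivalence_partition (@cyc_equiv n) (diagrams n)).

Definition cyc_class P := [set Q in diagrams n | cyc_equiv P Q].

Definition symmetric_diagrams := [set P in diagrams n |
  [exists k : 'I_(2 * n), (0 < k) && (chord_image (rot k) P == P)]].

Lemma cyc_equivP P Q : reflect (exists k, chord_image (rot k) P = Q) (cyc_equiv P Q).
Proof.
apply: (iffP existsP) => [[k /eqP <-] | [k <-]]; first by exists k.
by exists (Ordinal (ltn_pmod k m_gt0)); rewrite /= chord_image_modn.
Qed.

Lemma cyc_equiv_equivalence : equivalence_rel (@cyc_equiv n).
Proof.
move=> P Q R; split.
  by apply/cyc_equivP; exists 0; rewrite chord_image_rot0.
move=> /cyc_equivP[a <-]; apply/cyc_equivP/cyc_equivP => -[b <-].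
  by exists ((2 * n).-1 * a + b); rewrite -chord_imageD chord_imageK.
by exists (a + b); rewrite chord_imageD.
Qed.

Lemma cyc_partition : partition classes (diagrams n).
Proof. by apply: equivalence_partitionP => P Q R _ _ _; apply: cyc_equiv_equivalence. Qed.

Lemma card_cyc_class_le P : #|cyc_class P| <= 2 * n.
Proof.
apply: (@leq_trans #|[set chord_image (rot k) P | k : 'I_(2 * n)]|).
  apply/subset_leq_card/subsetP => Q; rewrite inE => /andP[_ /existsP[k /eqP <-]].
  exact: imset_f.
by rewrite (leq_trans (leq_imset_card _ _)) // card_ord.
Qed.

Lemma card_cyc_class_asym P : P \in diagrams n -> P \notin symmetric_diagrams ->
  2 * n <= #|cyc_class P|.
Proof.
move=> PD PS; set f := fun k : 'I_(2 * n) => chord_image (rot k) P.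
have f_inj : injective f.
  move=> a b fab; apply/val_inj/eqP; apply: contraR PS => ab.
  wlog lt_ab : a b fab ab / a < b.
    move=> W; have [lt_ab | lt_ba | eq_ab] := ltngtP a b.
    - exact: W a b fab ab lt_ab.
    - by apply: (W b a) => //; rewrite eq_sym.
    - by move: ab; rewrite /= eq_ab eqxx.
  have shift : chord_image (rot (b - a)) (f a) = f a.
    by rewrite /f chord_imageD subnKC 1?ltnW //; apply: esym.
  have PK : P = chord_image (rot ((2 * n).-1 * a)) (f a) by rewrite /f chord_imageK.
  rewrite inE PD; apply/existsP.
  exists (Ordinal (leq_ltn_trans (leq_subr a b) (ltn_ord b))).
  by rewrite /= subn_gt0 lt_ab /=; apply/eqP; rewrite [in LHS]PK chord_imageC shift -PK.
rewrite -[X in X <= _]card_ord -(card_imset _ f_inj).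
apply/subset_leq_card/subsetP => _ /imsetP[k _ ->].
by rewrite inE chord_image_diagrams //=; apply/cyc_equivP; exists k.
Qed.

Lemma oddfact_le_c : oddfact n <= 2 * n * c n.
Proof.
rewrite -card_diagrams (card_partition cyc_partition).
apply: (@leq_trans (\sum_(B in classes) 2 * n)).
  by apply: leq_sum => _ /imsetP[P _ ->]; apply: card_cyc_class_le.
by rewrite sum_nat_const /c mulnC.
Qed.

Lemma c_le_symmetric : 2 * n * c n <= oddfact n + 2 * n * #|symmetric_diagrams|.
Proof.
set S := symmetric_diagrams.
rewrite /c mulnC -sum_nat_const (bigID (fun B => B :&: S == set0)) /=.
apply: leq_add.
  rewrite -card_diagrams (card_partition cyc_partition).
  rewrite [X in _ <= X](bigID (fun B => B :&: S == set0)) /=.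
  apply: leq_trans (leq_addr _ _); apply: leq_sum => _ /andP[/imsetP[P PD ->] BS].
  apply: card_cyc_class_asym => //; apply: contraTN BS => PS; apply/set0Pn.
  exists P; rewrite in_setI PS andbT inE PD /=.
  exact: (cyc_equiv_equivalence P P P).1.
rewrite sum_nat_const mulnC leq_mul2l; apply/orP; right.
apply: leq_trans (leq_imset_card (pblock classes) S).
apply/subset_leq_card/subsetP => B; rewrite unfold_in => /andP[BE /set0Pn[Q]].
rewrite inE => /andP[QB QS]; apply/imsetP; exists Q => //.
by rewrite (def_pblock (partition_trivIset cyc_partition) BE QB).
Qed.

Lemma card_symmetric_diagrams : #|symmetric_diagrams| <= 2 * n * stable_bound n.
Proof.
apply: (@leq_trans
    #|\bigcup_(k : 'I_(2 * n) | 0 < k) stable_matchings k [set: 'I_(2 * n)]|).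
  apply/subset_leq_card/subsetP => P; rewrite inE.
  case/andP=> PD /existsP[k /andP[k_gt0 /eqP Pk]]; apply/bigcupP; exists k => //.
  by move: PD; rewrite diagramsE inE in_stable_matchings /rot_stable Pk subxx => ->.
apply: leq_trans (card_bigcup_le _ _) _.
apply: (@leq_trans (\sum_(k : 'I_(2 * n) | 0 < k) stable_bound n)).
  apply: leq_sum => k k_gt0; apply: card_stable_matchings.
    by rewrite k_gt0 ltn_ord.
  by rewrite cardsT card_ord.
rewrite sum_nat_const leq_mul2r; apply/orP; right.
by rewrite -[leqRHS]card_ord max_card.
Qed.

Lemma c_excess : (2 * n * c n - oddfact n) * n <= 200 * oddfact n.
Proof.
have c_le : 2 * n * c n <= oddfact n + 4 * (n * n * stable_bound n).
  apply: leq_trans c_le_symmetric _; rewrite leq_add2l.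
  by apply: leq_trans (leq_mul (leqnn _) card_symmetric_diagrams) _; lia.
have := leq_mul (leqnn n) c_le; have := stable_bound_le n.
rewrite !expnS expn0; lia.
Qed.

End CyclicClasses.

Import Order.TTheory GRing.Theory Num.Theory.
Local Open Scope ring_scope.

Lemma ratio_sub1_le (X O n C : nat) : (0 < O)%N -> (0 < n)%N -> (O <= X)%N ->
  ((X - O) * n <= C * O)%N -> `|X%:R / O%:R - 1| <= C%:R / n%:R :> rat.
Proof.
move=> O_gt0 n_gt0 OX XO_le.
rewrite -(subnK OX) natrD mulrDl divff; last by rewrite pnatr_eq0 -lt0n.
rewrite addrK ger0_norm ?divr_ge0 // ler_pdivrMr ?ltr0n //.
by rewrite mulrAC ler_pdivlMr ?ltr0n // -!natrM ler_nat.
Qed.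

Theorem corollary1 :
  (forall n : nat, (0 < n)%N ->
     (oddfact n)%:R / (2 * n)%:R <= (c n)%:R :> rat) /\
  (forall eps : rat, 0 < eps ->
     exists N : nat, forall n : nat, (N <= n)%N ->
       `| (c n)%:R * (2 * n)%:R / (oddfact n)%:R - 1 | < eps).
Proof.
split=> [n n_gt0 | eps eps_gt0].
  rewrite ler_pdivrMr ?ltr0n ?muln_gt0 // -natrM ler_nat (mulnC (c n)).
  exact: oddfact_le_c.
exists (maxn 1 (Num.bound (200 / eps))) => n; rewrite geq_max => /andP[n_gt0 n_ge].
have n_big : 200 / eps < n%:R.
  apply: lt_le_trans (archi_boundP _) _; last by rewrite ler_nat.
  exact: divr_ge0 (ler0n _ 200) (ltW eps_gt0).
rewrite -natrM (mulnC (c n)).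
apply: le_lt_trans
  (ratio_sub1_le (oddfact_gt0 n) n_gt0 (oddfact_le_c n_gt0) (c_excess n_gt0)) _.
rewrite ltr_pdivrMr; last by rewrite ltr0n.
by rewrite mulrC -ltr_pdivrMr; [exact: n_big | exact: eps_gt0].
Qed.
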